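(* Let $B \subset \mathbb{R}^3$ be a bounded convex set and let $\hat{P} \in \mathbb{R}^3$ with $\hat{P} \notin \mathrm{cl}(B)$. Then for every $\hat{P}' \in \mathbb{R}^3 \setminus B$: $\hat{P}' \in C^+(B,\hat{P})$ if and only if $\hat{P} \in C^-(B,\hat{P}')$.
   Context: For a bounded convex set $B \subset \mathbb{R}^3$ and a point $Q \in \mathbb{R}^3$ with $Q \notin B$: the positive half-cone $C^+(B,Q)$ is the set of points $Y \in \mathbb{R}^3$ for which there exist $x' \in B$ and $\alpha > 0$ such that $Y - Q = \alpha (Q - x')$. The negative half-cone $C^-(B,Q)$ is the set of points $Y \in \mathbb{R}^3 \setminus \mathrm{cl}(B)$ for which there exist $x' \in B$ and $0 < \alpha < 1$ such that $Y - Q = -\alpha (Q - x')$. Here $\mathrm{cl}(S)$ denotes the topological closure of $S$. *)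

From HB Require Import structures.
From mathcomp Require Import all_boot all_order all_algebra.
From mathcomp Require Import all_classical all_reals all_analysis.
Set Implicit Arguments. Unset Strict Implicit. Unset Printing Implicit Defensive.
Import Order.TTheory GRing.Theory Num.Theory.
Import numFieldNormedType.Exports.
Local Open Scope classical_set_scope.
Local Open Scope ring_scope.

Definition pos_halfcone (R : realType) (B : set 'rV[R]_3) (Q : 'rV[R]_3)
  : set 'rV[R]_3 :=
  [set Y | exists x', B x' /\ exists alpha : R, 0 < alpha /\ Y - Q = alpha *: (Q - x')].

Definition neg_halfcone (R : realType) (B : set 'rV[R]_3) (Q : 'rV[R]_3)
  : set 'rV[R]_3 :=
  [set Y | ~ closure B Y /\
     exists x', B x' /\ exists alpha : R,
       0 < alpha /\ alpha < 1 /\ Y - Q = - (alpha *: (Q - x'))].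

(* Both conditions say that P lies strictly between some x in B and P' on a
   line: P' - P = a (P - x) with a > 0 is the same relation as
   P - P' = - b (P' - x) with b = a / (a + 1) in (0, 1), the inverse
   reparametrisation being a = b / (1 - b).  The only other requirement of
   C^-(B, P'), namely P outside cl(B), is the hypothesis. *)
From HB Require Import structures.
From mathcomp Require Import all_boot all_order all_algebra.
From mathcomp Require Import all_classical all_reals all_analysis.
From mathcomp Require Import lra.
Import Order.TTheory GRing.Theory Num.Theory.
Import numFieldNormedType.Exports.
Local Open Scope classical_set_scope.
Local Open Scope ring_scope.

Section RayReparametrisation.
Variables (R : fieldType) (V : lmodType R).
Implicit Types (a b : R) (x Q Y : V).

Lemma ray_to_segment a x Q Y :
  a + 1 != 0 -> Y - Q = a *: (Q - x) -> Q - Y = - ((a / (a + 1)) *: (Y - x)).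
Proof.
move=> a1_neq0 eYQ.
have -> : Y - x = (a + 1) *: (Q - x).
  by rewrite scalerDl scale1r -eYQ addrA subrK.
by rewrite scalerA mulfVK // -eYQ opprB.
Qed.

Lemma segment_to_ray b x Q Y :
  1 - b != 0 -> Q - Y = - (b *: (Y - x)) -> Y - Q = (b / (1 - b)) *: (Q - x).
Proof.
move=> b1_neq0 eQY.
have -> : Q - x = (1 - b) *: (Y - x).
  by rewrite scalerBl scale1r [_ - b *: _]addrC -eQY addrA subrK.
by rewrite scalerA mulfVK //; apply: oppr_inj; rewrite opprB eQY.
Qed.

End RayReparametrisation.

Theorem proposition1 (R : realType) (B : set 'rV[R]_3) (P : 'rV[R]_3)
  (hBb : bounded_set B)
  (hBc : convex_set (B : set (convex_lmodType 'rV[R]_3)))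
  (hP : ~ closure B P) :
  forall P' : 'rV[R]_3, ~ B P' ->
    (pos_halfcone B P P' <-> neg_halfcone B P' P).
Proof.
move=> P' _; split.
- move=> [x [Bx [a [a_gt0 eP'P]]]]; split => //; exists x; split => //.
  have a1_gt0 : 0 < a + 1 by lra.
  exists (a / (a + 1)); split; first by rewrite divr_gt0.
  split; first by rewrite ltr_pdivrMr // mul1r; lra.
  by apply: ray_to_segment => //; rewrite gt_eqF.
- move=> [_ [x [Bx [b [b_gt0 [b_lt1 ePP']]]]]]; exists x; split => //.
  have b1_gt0 : 0 < 1 - b by lra.
  exists (b / (1 - b)); split; first by rewrite divr_gt0.
  by apply: segment_to_ray => //; rewrite gt_eqF.
Qed.
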